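(* Consider the Filtered Greedy Strategy (\texttt{FGS}), which maintains a current set $\mathcal B_1$ of atomic mini-batches and iteratively removes mini-batches from it. If a file $f$ satisfies the inequality $$n(f)\Bigl(l(f)+\sum_{b\in\mathcal B_1,\ l(b)<l(f)}s(b)\Bigr) < s(f)\Bigl(\sum_{f'\in\mathcal F,\ l(f')<l(f)}n(f')+\sum_{f'\in\mathcal F\setminus\mathcal F(\mathcal B_1),\ l(f')>l(f)}n(f')\Bigr)$$ (evaluated with the current set $\mathcal B_1$) in the $i$-th iteration of \texttt{FGS}, then $f$ also satisfies this inequality (evaluated with the then-current $\mathcal B_1$) in the $j$-th iteration for every $j\ge i$.
   Context: A single-track tape stores a sequence of files $\mathcal F=(f_1,\dots,f_n)$ laid out contiguously from left to right: file $f$ occupies blocks $l(f),\dots,r(f)$ and has size $s(f)=r(f)-l(f)+1$, with $l(f_1)=1$, $l(f_{i+1})=r(f_i)+1$. $\mathcal R$ is a finite set of read requests, each associated with a file; $n(f)$ is the number of requests for $f$. A mini-batch is a pair $b=(f,f')$ of files with $l(f)\le l(f')$; $l(b)=l(f)$, $r(b)=r(f')$, $s(b)=r(b)-l(b)+1$, $\mathcal F(b)$ is the set of files $g$ with $l(b)\le l(g)$, $r(g)\le r(b)$, atomic if $|\mathcal F(b)|=1$, and $\mathcal F(\mathcal B_1)=\bigcup_{b\in\mathcal B_1}\mathcal F(b)$. \texttt{FGS} starts with $\mathcal B_1=\{(f,f): f\in\mathcal F\setminus\{f_1\},\ n(f)>0\}$ (the output of the Greedy Strategy) and then, for $|\mathcal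 F|$ rounds, inspects each file $f\in\mathcal F(\mathcal B_1)$ and removes $(f,f)$ from $\mathcal B_1$ whenever the displayed inequality holds for the current $\mathcal B_1$; each inspection is an iteration. *)

From mathcomp Require Import all_boot.
Set Implicit Arguments. Unset Strict Implicit. Unset Printing Implicit Defensive.

Section FGS.
(* Files f_1..f_n are the ordinals 'I_n (f_1 is ord 0), laid out left to right;
   sz f = s(f) (in blocks), nreq f = n(f) = number of requests for f. *)
Variables (n : nat) (sz : 'I_n -> nat) (nreq : 'I_n -> nat).

(* l(f_1) = 1, l(f_{i+1}) = r(f_i) + 1 = l(f_i) + s(f_i). *)
Definition lpos (f : 'I_n) : nat := 1 + \sum_(k < n | k < f) sz k.

(* A set B1 of atomic mini-batches (f,f) is represented by the set of files f;
   for atomic b = (f,f), l(b) = l(f), s(b) = s(f), and F(B1) = B1. *)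
Definition fgs_ineq (B1 : {set 'I_n}) (f : 'I_n) : bool :=
  nreq f * (lpos f + \sum_(b in B1 | lpos b < lpos f) sz b)
  < sz f * (\sum_(g : 'I_n | lpos g < lpos f) nreq g
            + \sum_(g in ~: B1 | lpos f < lpos g) nreq g).

(* Initial set: output of the Greedy Strategy. *)
Definition fgs_init : {set 'I_n} :=
  [set f : 'I_n | (val f != 0) && (0 < nreq f)].

Definition fgs_step (f : 'I_n) (B1 : {set 'I_n}) : {set 'I_n} :=
  if fgs_ineq B1 f then B1 :\ f else B1.

(* Inspect the files of fs in order; returns the list of the sets B1 current
   at each inspection (i.e. when the inequality is evaluated), and the final set. *)
Fixpoint fgs_round (fs : seq 'I_n) (B1 : {set 'I_n})
  : seq {set 'I_n} * {set 'I_n} :=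
  match fs with
  | [::] => ([::], B1)
  | f :: fs' => let: (st, B') := fgs_round fs' (fgs_step f B1) in (B1 :: st, B')
  end.

(* k rounds; each round inspects every file of F(B1), left to right. *)
Fixpoint fgs_run (k : nat) (B1 : {set 'I_n}) : seq {set 'I_n} :=
  match k with
  | 0 => [::]
  | k'.+1 => let: (st, B') := fgs_round (enum B1) B1 in st ++ fgs_run k' B'
  end.

(* The sequence of sets B1 current at iterations 0,1,2,... of FGS (|F| = n rounds). *)
Definition fgs_trace : seq {set 'I_n} := fgs_run n fgs_init.

End FGS.

From mathcomp Require Import all_boot.

Set Implicit Arguments.
Unset Strict Implicit.

(* FGS only ever removes files from B1, so the sets current at successive
   iterations form a decreasing chain; and the inequality is antimonotone in B1,
   since shrinking B1 shrinks the left-hand sum and enlarges the complement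
   summed on the right. *)

Lemma leq_sum_subset (T : finType) (A B : {set T}) (P : pred T) (F : T -> nat) :
  A \subset B -> \sum_(x in A | P x) F x <= \sum_(x in B | P x) F x.
Proof.
move=> sAB; apply: (sub_le_big leqnn (fun x y => leq_addr y x)).
by move=> x /andP[/(subsetP sAB) -> ->].
Qed.

Definition superset (T : finType) : rel {set T} := fun A B => B \subset A.

Lemma superset_refl (T : finType) : reflexive (@superset T).
Proof. exact: subxx. Qed.

Lemma superset_trans (T : finType) : transitive (@superset T).
Proof. by move=> B A C sBA sCB; apply: subset_trans sCB sBA. Qed.

Lemma path_superset_weaken (T : finType) (A A' : {set T}) (s : seq {set T}) :
  A' \subset A -> path (@superset T) A' s -> path (@superset T) A s.
Proof.
by case: s => //= B s sA'A /andP[sBA' ->]; rewrite andbT; apply: subset_trans sA'A.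
Qed.

Section FGSChain.
Variables (n : nat) (sz nreq : 'I_n -> nat).

Local Notation superset := (@superset 'I_n).

Lemma fgs_ineq_antimono (B B' : {set 'I_n}) (f : 'I_n) :
  B' \subset B -> fgs_ineq sz nreq B f -> fgs_ineq sz nreq B' f.
Proof.
rewrite /fgs_ineq => sB'B lt_B; apply: leq_ltn_trans (leq_trans lt_B _).
  by rewrite leq_mul2l leq_add2l leq_sum_subset ?orbT.
by rewrite leq_mul2l leq_add2l leq_sum_subset ?orbT ?setCS.
Qed.

Lemma fgs_step_subset (f : 'I_n) (B : {set 'I_n}) : fgs_step sz nreq f B \subset B.
Proof. by rewrite /fgs_step; case: ifP => _; rewrite ?subD1set. Qed.

Lemma fgs_round_path (fs : seq 'I_n) (B : {set 'I_n}) :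
  let: (st, B') := fgs_round sz nreq fs B in path superset B (rcons st B').
Proof.
elim: fs B => [|f fs IH] B /=; first by rewrite superset_refl.
have := IH (fgs_step sz nreq f B); case: fgs_round => st B' /= path_st.
by rewrite superset_refl (path_superset_weaken (fgs_step_subset f B) path_st).
Qed.

Lemma fgs_run_path (k : nat) (B : {set 'I_n}) :
  path superset B (fgs_run sz nreq k B).
Proof.
elim: k B => [|k IH] B //=.
have := fgs_round_path (enum B) B; case: fgs_round => st B'.
by rewrite rcons_path cat_path => /andP[-> sB']; rewrite (path_superset_weaken sB' (IH B')).
Qed.

End FGSChain.

Theorem lemma1 (n : nat) (sz nreq : 'I_n -> nat) (hsz : forall f, 0 < sz f)
  (f : 'I_n) (i j : nat) :
  i <= j -> j < size (fgs_trace sz nreq) ->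
  fgs_ineq sz nreq (nth set0 (fgs_trace sz nreq) i) f ->
  fgs_ineq sz nreq (nth set0 (fgs_trace sz nreq) j) f.
Proof.
move=> le_ij lt_j; apply: fgs_ineq_antimono.
have sorted_trace := path_sorted (fgs_run_path sz nreq n (fgs_init nreq)).
exact: (sorted_leq_nth (@superset_trans _) (@superset_refl _) set0 sorted_trace)
  (leq_ltn_trans le_ij lt_j) lt_j le_ij.
Qed.
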